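(* Let $a,b$ be even elements of a (graded, right) pre-Lie algebra and let $N\ge1$. Then $$[\cdots[[a,b],b],\dots,b]\ (N\text{ copies of }b)\;=\;\sum_{i=0}^{N}(-1)^i\binom{N}{i}\Big(\cdots\big((b^{[i]}\circ a)\circ b\big)\circ\cdots\Big)\circ b,$$ where in the $i$-th summand $b$ is applied on the right $N-i$ times, $b^{[i]}=(\cdots(b\circ b)\circ\cdots)\circ b$ ($i$ factors), and the $i=0$ term $b^{[0]}\circ a$ is to be read as $a$.
   Context: A (graded, right) pre-Lie algebra is a graded module with a product $\circ$ of degree $0$ such that $(x\circ y)\circ z-x\circ(y\circ z)$ is graded symmetric in $y,z$, and $[x,y]=x\circ y-(-1)^{|x||y|}y\circ x$. ''Even'' refers to this grading. *)

From HB Require Import structures.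
From mathcomp Require Import all_boot all_order all_algebra.
Set Implicit Arguments. Unset Strict Implicit. Unset Printing Implicit Defensive.
Import Order.TTheory GRing.Theory Num.Theory.
Local Open Scope ring_scope.

Definition ksign (R : comNzRingType) (m n : int) : R := (-1) ^+ (absz (m * n)).

(* A graded (right) pre-Lie algebra over the commutative ring R:
   - V is an R-module, hom d is the set of homogeneous elements of degree d
     (each hom d a submodule);
   - comp is R-bilinear of degree 0;
   - (x o y) o z - x o (y o z) is graded symmetric in homogeneous y, z. *)
Definition is_graded_preLie (R : comNzRingType) (V : lmodType R)
    (comp : V -> V -> V) (hom : int -> pred V) : Prop :=
  [/\ [/\ (forall d, 0 \in hom d),
          (forall d x y, x \in hom d -> y \in hom d -> x + y \in hom d)
        & (forall d (r : R) x, x \in hom d -> r *: x \in hom d)],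
      (forall (r : R) x y z,
          comp (r *: x + y) z = r *: comp x z + comp y z
       /\ comp z (r *: x + y) = r *: comp z x + comp z y),
      (forall m n x y, x \in hom m -> y \in hom n -> comp x y \in hom (m + n))
    & (forall m n x y z, y \in hom m -> z \in hom n ->
          comp (comp x y) z - comp x (comp y z)
          = ksign R m n *: (comp (comp x z) y - comp x (comp z y)))].

Definition gbr (R : comNzRingType) (V : lmodType R) (comp : V -> V -> V)
    (x y : V) (dx dy : int) : V :=
  comp x y - ksign R dx dy *: comp y x.

Fixpoint lbr_iter (R : comNzRingType) (V : lmodType R) (comp : V -> V -> V)
    (x : V) (dx : int) (b : V) (db : int) (N : nat) : V :=
  match N with
  | 0 => x
  | n.+1 => lbr_iter comp (gbr comp x b dx db) (dx + db) b db n
  end.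

Definition rcomp_iter (V : Type) (comp : V -> V -> V) (b : V) (k : nat) (x : V) : V :=
  iter k (fun y => comp y b) x.

Definition bpow (V : Type) (comp : V -> V -> V) (b : V) (i : nat) : V :=
  rcomp_iter comp b i.-1 b.

Definition bpow_comp (V : Type) (comp : V -> V -> V) (b a : V) (i : nat) : V :=
  if i == 0%N then a else comp (bpow comp b i) a.

From HB Require Import structures.
From mathcomp Require Import all_boot all_algebra sesquilinear.
Set Implicit Arguments. Unset Strict Implicit. Unset Printing Implicit Defensive.
Import GRing.Theory.
Local Open Scope ring_scope.

(* For even b the bracket with b is D y = y o b - b o y, whatever the degree
   of y.  For homogeneous y the pre-Lie identity, with both signs trivial,
   reads x o D y = (x o y) o b - (x o b) o y, i.e. L_x D = R_b L_x - L_(x o b).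
   Iterating, x o D^n a is the alternating binomial sum of the
   R_b^(n-i) ((R_b^i x) o a), by Pascal's rule.  Finally
   D^(n+1) a = R_b (D^n a) - b o D^n a, and the case x = b of the previous
   formula, with R_b^i b = b^[i+1], gives the claim by Pascal's rule again. *)

Lemma ksign_evenr (R : comNzRingType) (m n : int) :
  ~~ odd `|n|%N -> ksign R m n = 1.
Proof.
by rewrite /ksign -signr_odd abszM oddM => /negbTE ->; rewrite andbF.
Qed.

Lemma sum_signed_binomialS (R : comNzRingType) (W : lmodType R)
    (g : nat -> nat -> W) n :
  \sum_(i < n.+2) (-1) ^+ i *: (g (n.+1 - i)%N i *+ 'C(n.+1, i))
  = \sum_(i < n.+1) (-1) ^+ i *: (g (n.+1 - i)%N i *+ 'C(n, i))
  - \sum_(i < n.+1) (-1) ^+ i *: (g (n - i)%N i.+1 *+ 'C(n, i)).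
Proof.
rewrite big_ord_recl [in RHS]big_ord_recl /= !subn0 !bin0 -addrA.
under [in LHS]eq_bigr => i _ do
  rewrite /bump /= add1n subSS binS mulrnDr scalerDr.
rewrite big_split /=; congr (_ + (_ + _)).
  rewrite big_ord_recr /= bin_small // mulr0n scaler0 addr0.
  by apply: eq_bigr => i _; rewrite /bump /= add1n subSS.
rewrite -sumrN; apply: eq_bigr => i _.
by rewrite exprS mulN1r scaleNr.
Qed.

Definition adr (V : zmodType) (comp : V -> V -> V) (b y : V) : V :=
  comp y b - comp b y.

Lemma lbr_iter_evenr (R : comNzRingType) (V : lmodType R)
    (comp : V -> V -> V) (x b : V) (dx db : int) n :
  ~~ odd `|db|%N -> lbr_iter comp x dx b db n = iter n (adr comp b) x.
Proof.
move=> db_even; elim: n x dx => [|n IHn] x dx //=.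
by rewrite IHn -iterS iterSr /gbr ksign_evenr // scale1r.
Qed.

Section BilinearProduct.

Variables (R : comNzRingType) (V : lmodType R) (comp : V -> V -> V) (b : V).
Hypothesis comp_bilinear : bilinear_for *:%R *:%R comp.

HB.instance Definition _ :=
  bilinear_isBilinear.Build R V V V _ _ comp comp_bilinear.

Definition rcomp_binomial_sum n (c : nat -> V) : V :=
  \sum_(i < n.+1) (-1) ^+ i *: (rcomp_iter comp b (n - i) (c i) *+ 'C(n, i)).

Lemma rcomp_binomial_sum0 c : rcomp_binomial_sum 0 c = c 0%N.
Proof. by rewrite /rcomp_binomial_sum big_ord1 scale1r. Qed.

Lemma rcomp_binomial_sumS n c :
  rcomp_binomial_sum n.+1 c
  = comp (rcomp_binomial_sum n c) b - rcomp_binomial_sum n (fun i => c i.+1).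
Proof.
rewrite /rcomp_binomial_sum.
rewrite (sum_signed_binomialS (fun k i => rcomp_iter comp b k (c i))).
rewrite linear_sumlz; congr (_ - _).
apply: eq_bigr => i _.
by rewrite linearZl_LR linearMnl subSn // -ltnS.
Qed.

Section GradedPreLie.

Variables (hom : int -> pred V) (q : int).
Hypotheses (hom_add : forall d x y,
              x \in hom d -> y \in hom d -> x + y \in hom d)
           (hom_scale : forall d (r : R) x, x \in hom d -> r *: x \in hom d)
           (comp_hom : forall m n x y,
              x \in hom m -> y \in hom n -> comp x y \in hom (m + n))
           (comp_preLie : forall m n x y z, y \in hom m -> z \in hom n ->
              comp (comp x y) z - comp x (comp y z)
              = ksign R m n *: (comp (comp x z) y - comp x (comp z y)))
           (b_hom : b \in hom q) (q_even : ~~ odd `|q|%N).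

Local Notation D := (adr comp b).

Lemma adr_iter_hom n a p : a \in hom p -> iter n D a \in hom (p + q *+ n).
Proof.
move=> a_hom; elim: n => [|n IHn]; first by rewrite mulr0n addr0.
rewrite iterS mulrSr addrA; apply: hom_add; first exact: comp_hom.
by rewrite -scaleN1r; apply: hom_scale; rewrite addrC; apply: comp_hom.
Qed.

Lemma comp_adr x y m :
  y \in hom m -> comp x (D y) = comp (comp x y) b - comp (comp x b) y.
Proof.
move=> y_hom; have := comp_preLie x y_hom b_hom.
rewrite ksign_evenr // scale1r /adr linearBr => /eqP.
by rewrite subr_eq => /eqP ->; rewrite [RHS]addrC addrA addKr addrC.
Qed.

Lemma comp_adr_iter n x a p : a \in hom p ->
  comp x (iter n D a)
  = rcomp_binomial_sum n (fun i => comp (rcomp_iter comp b i x) a).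
Proof.
move=> a_hom; elim: n x => [|n IHn] x; first by rewrite rcomp_binomial_sum0.
rewrite iterS (comp_adr _ (adr_iter_hom n a_hom)) !IHn rcomp_binomial_sumS.
by congr (_ - _); apply: eq_bigr => i _; rewrite /rcomp_iter iterSr.
Qed.

Lemma adr_iter_binomial n a p : a \in hom p ->
  iter n D a = rcomp_binomial_sum n (bpow_comp comp b a).
Proof.
move=> a_hom; elim: n => [|n IHn]; first by rewrite rcomp_binomial_sum0.
by rewrite iterS {1}/adr {1}IHn (comp_adr_iter _ _ a_hom) rcomp_binomial_sumS.
Qed.

End GradedPreLie.

End BilinearProduct.

Theorem lemma7p9 (R : comNzRingType) (V : lmodType R) (comp : V -> V -> V)
    (hom : int -> pred V) (Hgpl : is_graded_preLie comp hom)
    (a b : V) (p q : int) (Ha : a \in hom p) (Hb : b \in hom q)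
    (Hp : ~~ odd (absz p)) (Hq : ~~ odd (absz q)) (N : nat) (HN : (1 <= N)%N) :
  lbr_iter comp a p b q N
  = \sum_(i < N.+1)
      ((-1) ^+ i *: (rcomp_iter comp b (N - i) (bpow_comp comp b a i) *+ 'C(N, i))).
Proof.
case: Hgpl => [[_ hom_add hom_scale] comp_linear comp_hom comp_preLie].
have comp_bilinear : bilinear_for *:%R *:%R comp.
  by split=> z r x y; have [] := comp_linear r x y z.
rewrite lbr_iter_evenr //.
exact: (adr_iter_binomial comp_bilinear hom_add hom_scale comp_hom comp_preLie
          Hb Hq N Ha).
Qed.
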